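(* Let $N\ge 1$ and $n\ge 2N+2$ be integers, let $x\in\{0,1\}^N$ and $k^\star\in[N]$. Let $G$ be the graph on vertex set $P\cup U\cup W$ with $P=\{v_1,\dots,v_{n-2N}\}$, $U=\{u_1,\dots,u_N\}$, $W=\{w_1,\dots,w_N\}$ (so $n$ vertices), whose edges are: $v_iv_{i+1}$ for $1\le i<n-2N$; $u_iw_i$ for all $i\in[N]$; $v_1u_i$ for every $i$ with $x_i=1$; $v_1w_i$ for every $i\neq k^\star$; and $w_{k^\star}v_{n-2N}$. If $x_{k^\star}=1$ then the graphic TSP cost of $G$ is at most $n+2N$; if $x_{k^\star}=0$ then the graphic TSP cost of $G$ is at least $2n-N-1$.
   Context: For a connected unweighted undirected graph $G=(V,E)$ with $n\ge 2$ vertices, the graphic TSP cost is $\min \sum_{i=1}^{n} d_G(v_i,v_{i+1})$ over cyclic orderings $(v_1,\dots,v_n)$ of $V$ ($v_{n+1}=v_1$), where $d_G$ is shortest-path distance. *)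

From mathcomp Require Import all_boot all_fingroup.
Set Implicit Arguments. Unset Strict Implicit. Unset Printing Implicit Defensive.

(* A graph is an edge relation e : rel T on a finType T
   (assumed symmetric where relevant). *)

Section Graphic.
Variable T : finType.
Variable e : rel T.

Definition walkb (k : nat) (x y : T) : bool :=
  [exists p : k.-tuple T, path e x p && (last x p == y)].

(* shortest-path distance: least k such that a walk of length k exists
   (searched among 0..#|T|-1, which suffices for connected graphs;
   returns #|T| if y is unreachable from x). *)
Definition gdist (x y : T) : nat :=
  find (fun k => walkb k x y) (iota 0 #|T|).

Definition tour_cost (s : seq T) : nat :=
  if s is x :: s' then sumn (pairmap gdist x (rcons s' x)) else 0.

Definition perm_tour (p : {perm T}) : seq T := [seq p v | v <- enum T].

Definition tsp_cost : nat :=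
  tour_cost (perm_tour [arg min_(p < (1 : {perm T})%g) tour_cost (perm_tour p)]).

End Graphic.

(* The gadget graph. Vertices: inl i = v_{i+1} (i < M, M = n - 2N),
   inr (inl i) = u_{i+1}, inr (inr i) = w_{i+1} (i < N). *)
Definition gadget_V (M N : nat) : finType := ('I_M + ('I_N + 'I_N))%type.

Definition gadget_arc (M N : nat) (x : 'I_N -> bool) (ks : 'I_N)
  (a b : gadget_V M N) : bool :=
  match a, b with
  | inl i, inl j => i.+1 == j
  | inr (inl i), inr (inr j) => i == j
  | inl i, inr (inl j) => (i == 0 :> nat) && x j
  | inl i, inr (inr j) => (i == 0 :> nat) && (j != ks)
  | inr (inr j), inl i => (j == ks) && (i == M.-1 :> nat)
  | _, _ => false
  end.

Definition gadget_edge (M N : nat) (x : 'I_N -> bool) (ks : 'I_N) :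
  rel (gadget_V M N) :=
  fun a b => gadget_arc x ks a b || gadget_arc x ks b a.

From mathcomp Require Import all_boot all_fingroup.
From mathcomp Require ssrint.
From mathcomp Require Import zify.
Import ssrint.IntDist.
Set Implicit Arguments. Unset Strict Implicit. Unset Printing Implicit Defensive.

(* Upper bound (x_ks = 1): the explicit tour v_0 ... v_(m+1), w_ks, u_ks,
   then w_i, u_i for i != ks, costs at most 3 when leaving a u-vertex and 1
   otherwise, i.e. at most (m+2) + 4N = n + 2N.

   Lower bound (x_ks = 0): we build a pseudometric lb_dist made of cut
   metrics, with lb_dist <= 2 on every edge, hence lb_dist <= 2 d_G.  The
   potential [height] makes every tour climb from v_0 to u_ks and back
   (contributing 4(m+3)), and the three cuts around each pendant pair
   {u_i, w_i}, i != ks, contribute 6 each; halving gives 2n - N - 1. *)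

Section WalkSums.
Variable T : eqType.
Implicit Types (F G d : T -> T -> nat) (x a b u : T) (s : seq T).

Definition walk_sum F x s : nat := sumn (pairmap F x s).

Lemma walk_sum_cat F x s1 s2 :
  walk_sum F x (s1 ++ s2) = walk_sum F x s1 + walk_sum F (last x s1) s2.
Proof. by rewrite /walk_sum pairmap_cat sumn_cat. Qed.

Lemma walk_sumD F G x s :
  walk_sum (fun a b => F a b + G a b) x s = walk_sum F x s + walk_sum G x s.
Proof. by elim: s x => [|y s IH] x //=; rewrite /walk_sum /= in IH *; rewrite IH addnACA. Qed.

Lemma walk_sumM k F x s : walk_sum (fun a b => k * F a b) x s = k * walk_sum F x s.
Proof.
elim: s x => [|y s IH] x; first by rewrite /walk_sum muln0.
by rewrite /walk_sum /= in IH *; rewrite IH mulnDr.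
Qed.

Lemma walk_sum_big (I : Type) (r : seq I) (P : pred I) (F : I -> T -> T -> nat) x s :
  walk_sum (fun a b => \sum_(i <- r | P i) F i a b) x s =
  \sum_(i <- r | P i) walk_sum (F i) x s.
Proof.
elim: s x => [|y s IH] x /=; first by rewrite /walk_sum big1.
by rewrite /walk_sum /= in IH *; rewrite IH big_split.
Qed.

Lemma leq_walk_sum F G x s : (forall a b, F a b <= G a b) -> walk_sum F x s <= walk_sum G x s.
Proof. by move=> FG; elim: s x => [|y s IH] x //=; apply: leq_add; [apply: FG | apply: IH]. Qed.

Lemma walk_sum_le_weights F (G : T -> nat) x s :
  path (fun a b => F a b <= G a) x s -> walk_sum F x s <= sumn (map G (belast x s)).
Proof. by elim: s x => [|y s IH] x //= /andP[Fxy /IH]; apply: leq_add. Qed.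

Definition pseudometric d : Prop :=
  [/\ forall a, d a a = 0, forall a b, d a b = d b a
    & forall a b c, d a c <= d a b + d b c].

Section Pseudometric.
Variables (d : T -> T -> nat) (dP : pseudometric d).

Lemma walk_sum_ge_ends x s : d x (last x s) <= walk_sum d x s.
Proof.
case: dP => d0 _ dtri; elim: s x => [|y s IH] x /=; first by rewrite d0.
by apply: leq_trans (dtri x y _) _; apply: leq_add.
Qed.

Lemma walk_sum_ge_via x s u :
  u \in x :: s -> d x u + d u (last x s) <= walk_sum d x s.
Proof.
case/splitPl => s1 s2 <-; rewrite walk_sum_cat last_cat.
by apply: leq_add; apply: walk_sum_ge_ends.
Qed.

Lemma closed_walk_sum_ge x s a b : last x s = x ->
  a \in x :: s -> b \in x :: s -> 2 * d a b <= walk_sum d x s.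
Proof.
case: dP => _ dC dtri walk_closed a_in; move: walk_closed.
case/splitPl: a_in => s1 s2 ends_a; rewrite last_cat ends_a => walk_closed.
rewrite -cat_cons mem_cat walk_sum_cat => /orP[] b_in.
- have := walk_sum_ge_via b_in; have := walk_sum_ge_ends (last x s1) s2.
  rewrite ends_a walk_closed => h2 h1.
  have := dtri a x b; rewrite (dC b a) (dC a x) in h1 h2 *; lia.
- have : b \in last x s1 :: s2 by rewrite inE b_in orbT.
  move=> /walk_sum_ge_via; have := walk_sum_ge_ends x s1.
  rewrite ends_a walk_closed => h1 h2.
  have := dtri b x a; rewrite (dC x a) (dC b a) in h1 h2 *; lia.
Qed.
End Pseudometric.

Lemma pseudometricD d1 d2 : pseudometric d1 -> pseudometric d2 ->
  pseudometric (fun a b => d1 a b + d2 a b).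
Proof.
case=> z1 C1 t1 [z2 C2 t2]; split=> [a|a b|a b c]; first by rewrite z1 z2.
  by rewrite C1 C2.
by rewrite addnACA; apply: leq_add.
Qed.

Lemma pseudometricM k d : pseudometric d -> pseudometric (fun a b => k * d a b).
Proof.
case=> z C t; split=> [a|a b|a b c]; first by rewrite z muln0.
  by rewrite C.
by rewrite -mulnDr leq_mul2l t orbT.
Qed.

Lemma pseudometric_big (I : Type) (r : seq I) (P : pred I) (F : I -> T -> T -> nat) :
  (forall i, P i -> pseudometric (F i)) ->
  pseudometric (fun a b => \sum_(i <- r | P i) F i a b).
Proof.
move=> FP; split=> [a|a b|a b c].
- by rewrite big1 // => i /FP[].
- by apply: eq_bigr => i /FP[].
- rewrite -big_split; apply: leq_sum => i /FP[]; auto.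
Qed.

Definition potdist (g : T -> nat) a b : nat := `|g a - g b|.

Lemma potdistP g : pseudometric (potdist g).
Proof. by split=> [a|a b|a b c]; rewrite /potdist; lia. Qed.

End WalkSums.

Lemma iota_succ_path k l : path (fun a b => a.+1 == b) k (iota k.+1 l).
Proof. by elim: l k => //= l IH k; rewrite eqxx IH. Qed.

Lemma last_iota k l : last k (iota k.+1 l) = k + l.
Proof. by elim: l k => [|l IH] k /=; rewrite ?addn0 // IH addnS. Qed.

Section GraphDistance.
Variables (T : finType) (e : rel T).
Implicit Types (a b : T) (k : nat).

Lemma gdist_le_walk k a b : walkb e k a b -> k < #|T| -> gdist e a b <= k.
Proof.
move=> w lt_k; rewrite /gdist leqNgt; apply/negP => /(before_find 0).
by rewrite nth_iota // add0n w.
Qed.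

Lemma gdist_le_path a p : path e a p -> size p < #|T| -> gdist e a (last a p) <= size p.
Proof.
move=> e_p lt_p; apply: gdist_le_walk lt_p.
by apply/existsP; exists (in_tuple p); rewrite /= e_p eqxx.
Qed.

Lemma gdist_max a b : gdist e a b <= #|T|.
Proof. by have := find_size (fun k => walkb e k a b) (iota 0 #|T|); rewrite size_iota. Qed.

Lemma gdist_walk a b : gdist e a b < #|T| -> walkb e (gdist e a b) a b.
Proof.
move=> lt_d; have reach : has (fun k => walkb e k a b) (iota 0 #|T|).
  by rewrite has_find size_iota.
by have := nth_find 0 reach; rewrite nth_iota // add0n.
Qed.

(* a pseudometric whose edges have length at most c is c-Lipschitz w.r.t.
   the graph distance; the second hypothesis covers unreachable pairs *)
Lemma pseudometric_le_gdist (d : T -> T -> nat) c : pseudometric d ->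
  (forall a b, e a b -> d a b <= c) -> (forall a b, d a b <= c * #|T|) ->
  forall a b, d a b <= c * gdist e a b.
Proof.
case=> d0 _ dtri d_edge d_max a b.
have := gdist_max a b; rewrite leq_eqVlt => /orP[/eqP -> // | /gdist_walk].
move: (gdist e a b) => k /existsP[[p /= /eqP <-] /andP[e_p /eqP <-]].
elim: p a e_p => [|y s IH] {}a /=; first by rewrite d0.
case/andP=> e_ay /IH d_y; apply: leq_trans (dtri a y _) _.
by rewrite mulnS leq_add ?d_edge.
Qed.

Lemma tour_cost_cons y s : tour_cost e (y :: s) = walk_sum (gdist e) y (rcons s y).
Proof. by []. Qed.

Lemma perm_tour_full (p : {perm T}) v : v \in perm_tour p.
Proof. by apply/mapP; exists (p^-1 v)%g; rewrite ?mem_enum ?permKV. Qed.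

Lemma perm_tour_surj (s : seq T) : perm_eq s (enum T) -> exists p : {perm T}, perm_tour p = s.
Proof.
move=> s_perm; have size_s : size s = size (enum T) := perm_size s_perm.
have uniq_s : uniq s by rewrite (perm_uniq s_perm) enum_uniq.
pose f v := nth v s (index v (enum T)).
have index_lt v : index v (enum T) < size s by rewrite size_s index_mem mem_enum.
have f_inj : injective f.
  move=> u v; rewrite /f (set_nth_default u v (index_lt v)) => /eqP.
  by rewrite nth_uniq // => /eqP /index_inj; rewrite !mem_enum; apply.
exists (perm f_inj); case s_eq: s => [|y s'].
  by move: size_s; rewrite s_eq /perm_tour => /esym/size0nil ->.
rewrite -s_eq; apply: (@eq_from_nth _ y); first by rewrite size_map size_s.
move=> i; rewrite size_map => lt_i; rewrite (nth_map y) // permE /f.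
by rewrite index_uniq ?enum_uniq //; apply: set_nth_default; rewrite size_s.
Qed.

Lemma tsp_cost_le_tour (s : seq T) : perm_eq s (enum T) -> tsp_cost e <= tour_cost e s.
Proof.
case/perm_tour_surj => p <-; rewrite /tsp_cost.
by case: arg_minnP => // q _; apply.
Qed.

Lemma tsp_cost_ge (v0 : T) lb :
  (forall y s, (forall v, v \in y :: s) -> lb <= walk_sum (gdist e) y (rcons s y)) ->
  lb <= tsp_cost e.
Proof.
move=> lb_walk; rewrite /tsp_cost; set p := [arg min_(_ < _) _].
case tour_p: (perm_tour p) (perm_tour_full p) => [|y s] full; first by have := full v0.
by rewrite tour_cost_cons; apply: lb_walk.
Qed.

End GraphDistance.

Section Gadget.
Variables (m N : nat) (x : 'I_N -> bool) (ks : 'I_N).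

(* The path P has m+2 >= 2 vertices v_0, ..., v_(m+1) (0-indexed). *)
Notation V := (gadget_V m.+2 N).
Notation e := (gadget_edge (M := m.+2) x ks).

Definition v_ (i : 'I_m.+2) : V := inl i.
Definition u_ (j : 'I_N) : V := inr (inl j).
Definition w_ (j : 'I_N) : V := inr (inr j).

Lemma eq_uu i j : (u_ i == u_ j) = (i == j). Proof. by apply/eqP/eqP => [[]|->]. Qed.
Lemma eq_ww i j : (w_ i == w_ j) = (i == j). Proof. by apply/eqP/eqP => [[]|->]. Qed.
Lemma eq_uw i j : (u_ i == w_ j) = false. Proof. by []. Qed.
Lemma eq_wu i j : (w_ i == u_ j) = false. Proof. by []. Qed.
Lemma eq_vu k j : (v_ k == u_ j) = false. Proof. by []. Qed.
Lemma eq_vw k j : (v_ k == w_ j) = false. Proof. by []. Qed.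
Definition gadget_eqE := (eq_uu, eq_ww, eq_uw, eq_wu, eq_vu, eq_vw).

Lemma card_gadget : #|V| = m.+2 + (N + N).
Proof. by rewrite !card_sum !card_ord. Qed.

Section LowerBound.

(* Potential lifting the detour w_ks, u_ks above the end of the path P;
   it forces every tour to climb from v_0 to u_ks and back. *)
Definition height (v : V) : nat :=
  match v with
  | inl i => i
  | inr (inl j) => if j == ks then m.+3 else 0
  | inr (inr j) => if j == ks then m.+2 else 0
  end.

Definition touches (i : 'I_N) (v : V) : bool := (v == u_ i) || (v == w_ i).

(* Three cuts around the pendant pair {u_i, w_i}: every tour crosses each
   of them twice. *)
Definition pair_dist (i : 'I_N) (a b : V) : nat :=
  potdist (fun v => nat_of_bool (v == u_ i)) a b
  + potdist (fun v => nat_of_bool (v == w_ i)) a b + potdist (touches i) a b.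

Definition lb_dist (a b : V) : nat :=
  2 * potdist height a b + \sum_(i < N | i != ks) pair_dist i a b.

Lemma lb_distP : pseudometric lb_dist.
Proof.
apply: pseudometricD; first exact/pseudometricM/potdistP.
apply: pseudometric_big => i _.
by apply: pseudometricD; first apply: pseudometricD; apply: potdistP.
Qed.

Lemma touches_v i k : touches i (v_ k) = false. Proof. by []. Qed.
Lemma touches_u i j : touches i (u_ j) = (j == i).
Proof. by rewrite /touches !gadget_eqE orbF. Qed.
Lemma touches_w i j : touches i (w_ j) = (j == i).
Proof. by rewrite /touches !gadget_eqE. Qed.
Definition touchesE := (touches_v, touches_u, touches_w).

Lemma sum_pair_dist a b j :
  (forall i, touches i a || touches i b -> i = j) ->
  \sum_(i < N | i != ks) pair_dist i a b = (j != ks) * pair_dist j a b.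
Proof.
move=> untouched.
have off i : i != j -> pair_dist i a b = 0.
  move=> ij; have /norP[] : ~~ (touches i a || touches i b).
    by apply: contra ij => /untouched ->.
  rewrite /pair_dist /potdist /touches.
  by move=> /norP[/negbTE-> /negbTE->] /norP[/negbTE-> /negbTE->].
case: (eqVneq j ks) off => [-> | j_ks] off.
  by rewrite big1.
by rewrite mul1n (bigD1 j) //= big1 ?addn0 // => i /andP[_]; apply: off.
Qed.

Hypothesis xk0 : ~~ x ks.

(* every edge crosses the height by at most 1 and at most two cuts *)
Lemma lb_dist_arc a b : gadget_arc x ks a b -> lb_dist a b <= 2.
Proof.
rewrite /lb_dist; case: a => [i|[i|i]]; case: b => [j|[j|j]] //=.
- move=> /eqP ij; rewrite (sum_pair_dist (j := ks)) ?touchesE //.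
  by rewrite eqxx mul0n /potdist /= -ij; lia.
- case/andP=> /eqP i0 xj; have j_ks : j != ks by apply: contraNneq xk0 => <-.
  rewrite (sum_pair_dist (j := j)) => [|i']; last by rewrite !touchesE => /eqP.
  by rewrite /pair_dist /potdist /touches !gadget_eqE /= i0 (negbTE j_ks) eqxx.
- case/andP=> /eqP i0 j_ks.
  rewrite (sum_pair_dist (j := j)) => [|i']; last by rewrite !touchesE => /eqP.
  by rewrite /pair_dist /potdist /touches !gadget_eqE /= i0 (negbTE j_ks) eqxx.
- move=> /eqP <-; rewrite (sum_pair_dist (j := i)) => [|i']; last first.
    by rewrite !touchesE orbb => /eqP.
  case: (eqVneq i ks) => [-> | i_ks]; first by rewrite /potdist /= eqxx; lia.
  by rewrite /pair_dist /potdist /touches ?gadget_eqE /= (negbTE i_ks) !eqxx.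
- case/andP=> /eqP -> /eqP j_last; rewrite (sum_pair_dist (j := ks)) => [|i']; last first.
    by rewrite !touchesE orbF => /eqP.
  by rewrite /potdist /= j_last eqxx; lia.
Qed.

Lemma lb_dist_edge a b : e a b -> lb_dist a b <= 2.
Proof.
case: lb_distP => _ dC _; case/orP => [|/lb_dist_arc]; first exact: lb_dist_arc.
by rewrite dC.
Qed.

(* a crude global bound, covering pairs the graph might not connect *)
Lemma lb_dist_max a b : lb_dist a b <= 2 * #|V|.
Proof.
have height_max v : height v <= m.+3.
  by case: v => [i|[i|i]] /=; [have := ltn_ord i; lia | case: ifP | case: ifP].
have pair_max i : pair_dist i a b <= 3 by rewrite /pair_dist /potdist; lia.
have cuts : \sum_(i < N | i != ks) pair_dist i a b <= N.-1 * 3.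
  by rewrite -[N in N.-1](card_ord N) -(cardC1 ks) -sum_nat_const leq_sum.
have := height_max a; have := height_max b; have := ltn_ord ks.
rewrite card_gadget /lb_dist /potdist; lia.
Qed.

Lemma lb_dist_gdist a b : lb_dist a b <= 2 * gdist e a b.
Proof.
exact: (pseudometric_le_gdist lb_distP lb_dist_edge lb_dist_max).
Qed.

Section ClosedWalk.
Variables (y : V) (s : seq V).
Hypothesis s_full : forall v, v \in y :: s.
Let r := rcons s y.

Let closed_walk_ge d a b : pseudometric d -> 2 * d a b <= walk_sum d y r.
Proof.
have r_full v : v \in y :: r by rewrite inE mem_rcons s_full orbT.
by move=> dP; apply: closed_walk_sum_ge; rewrite ?last_rcons ?r_full.
Qed.

(* each pendant pair contributes 6: its three cuts are each crossed twice *)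
Lemma pair_dist_walk i : 6 <= walk_sum (pair_dist i) y r.
Proof.
rewrite /pair_dist !walk_sumD.
have := closed_walk_ge (u_ i) (v_ ord0) (potdistP (fun v => nat_of_bool (v == u_ i))).
have := closed_walk_ge (w_ i) (v_ ord0) (potdistP (fun v => nat_of_bool (v == w_ i))).
have := closed_walk_ge (u_ i) (v_ ord0) (potdistP (touches i)).
rewrite /potdist /touches !gadget_eqE !eqxx /=; lia.
Qed.

(* the climb from v_0 up to u_ks and back contributes 4 (m + 3) *)
Lemma lb_dist_walk : 4 * m.+3 + 6 * N.-1 <= walk_sum lb_dist y r.
Proof.
rewrite /lb_dist walk_sumD walk_sumM walk_sum_big.
have climb := closed_walk_ge (u_ ks) (v_ ord0) (potdistP height).
have pairs : \sum_(i < N | i != ks) 6 <= \sum_(i < N | i != ks) walk_sum (pair_dist i) y r.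
  by apply: leq_sum => i _; apply: pair_dist_walk.
move: climb pairs; rewrite sum_nat_const cardC1 card_ord /potdist /= eqxx; lia.
Qed.
End ClosedWalk.

Lemma gadget_lower : 2 * m.+2 + 3 * N - 1 <= tsp_cost e.
Proof.
apply: (tsp_cost_ge (v_ ord0)) => y s s_full.
have := leq_trans (lb_dist_walk s_full) (leq_walk_sum y (rcons s y) lb_dist_gdist).
rewrite walk_sumM; have := ltn_ord ks; lia.
Qed.

End LowerBound.

Section UpperBound.
Hypothesis xk1 : x ks.

Notation v0 := (v_ ord0).

(* the gadget has at least 4 vertices, so short paths bound distances *)
Lemma gadget_path_dist a p : path e a p -> size p <= 3 -> gdist e a (last a p) <= size p.
Proof.
move=> e_p small_p; apply: gdist_le_path e_p _.
by rewrite card_gadget; have := ltn_ord ks; lia.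
Qed.

(* leaving u_j: back to v_0, or on to the pendant pair of some i != ks *)
Lemma dist_u_v0 j : gdist e (u_ j) v0 <= 2.
Proof.
case: (eqVneq j ks) => [-> | j_ks].
  apply: leq_trans (gadget_path_dist (p := [:: v0]) _ _) _ => //.
  by rewrite /= /gadget_edge /= xk1.
apply: leq_trans (gadget_path_dist (p := [:: w_ j; v0]) _ _) _ => //.
by rewrite /= /gadget_edge /= eqxx j_ks orbT.
Qed.

Lemma dist_u_w j i : i != ks -> gdist e (u_ j) (w_ i) <= 3.
Proof.
move=> i_ks; case: (eqVneq j ks) => [-> | j_ks].
  apply: leq_trans (gadget_path_dist (p := [:: v0; w_ i]) _ _) _ => //.
  by rewrite /= /gadget_edge /= xk1 i_ks.
apply: leq_trans (gadget_path_dist (p := [:: w_ j; v0; w_ i]) _ _) _ => //.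
by rewrite /= /gadget_edge /= eqxx j_ks i_ks orbT.
Qed.

Lemma dist_edge a b : e a b -> gdist e a b <= 1.
Proof. by move=> e_ab; apply: (gadget_path_dist (p := [:: b])) => //; apply/andP. Qed.

Lemma edge_wu j : e (w_ j) (u_ j).
Proof. by rewrite /gadget_edge /= eqxx. Qed.

(* A tour step a -> b is cheap if it costs at most weight a: 3 when leaving
   some u_j (to reach the next pendant pair, or v_0), 1 otherwise. *)
Definition weight (v : V) : nat := if v is inr (inl _) then 3 else 1.
Definition cheap_step (a b : V) : bool := gdist e a b <= weight a.

Definition pendants (l : seq 'I_N) : seq V := flatten [seq [:: w_ i; u_ i] | i <- l].

Lemma mem_pendants l v : (v \in pendants l) =
  match v with inl _ => false | inr (inl j) | inr (inr j) => j \in l end.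
Proof.
elim: l => [|i l IH] /=; first by case: v => [?|[?|?]].
rewrite /pendants /= -/(pendants l) !inE {}IH.
by case: v => [k|[k|k]] //=; rewrite !gadget_eqE.
Qed.

Lemma pendants_uniq l : uniq l -> uniq (pendants l).
Proof.
elim: l => [|i l IH] //= /andP[i_l /IH uniq_l].
by rewrite /pendants /= -/(pendants l) inE !mem_pendants gadget_eqE /= (negbTE i_l).
Qed.

Lemma pendants_path j l : all (fun i => i != ks) l ->
  path cheap_step (u_ j) (rcons (pendants l) v0).
Proof.
elim: l j => [|i l IH] j /=; first by rewrite /cheap_step (leq_trans (dist_u_v0 j)).
case/andP=> i_ks /IH; rewrite /cheap_step (dist_u_w j i_ks) /=.
by rewrite (dist_edge (edge_wu i)); apply.
Qed.

Definition spine : seq 'I_m.+2 := [seq lift ord0 i | i <- enum 'I_m.+1].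
Definition others : seq 'I_N := [seq i <- enum 'I_N | i != ks].
Definition gadget_tour : seq V :=
  v0 :: [seq v_ i | i <- spine] ++ w_ ks :: u_ ks :: pendants others.

Lemma gadget_tour_perm : perm_eq gadget_tour (enum V).
Proof.
have tour_enum : [seq v_ i | i <- enum 'I_m.+2] = v0 :: [seq v_ i | i <- spine].
  by rewrite enum_ordSl.
rewrite /gadget_tour -[_ :: _ ++ _]cat_cons -tour_enum.
apply: uniq_perm; rewrite ?enum_uniq //.
- rewrite cat_uniq (map_inj_uniq (@inl_inj _ _)) ?enum_uniq //=.
  rewrite !inE !mem_pendants !gadget_eqE /= !mem_filter eqxx /=.
  rewrite pendants_uniq ?andbT; last by rewrite filter_uniq ?enum_uniq.
  apply/negP => /or3P[/mapP[k _] | /mapP[k _] | /hasP[v v_pend /mapP[k _ v_k]]] //.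
  by rewrite v_k mem_pendants in v_pend.
- move=> v; rewrite mem_enum mem_cat !inE mem_pendants.
  case: v => [k|[k|k]] /=; first by rewrite (map_f v_ (mem_enum _ k)).
  all: by rewrite ?gadget_eqE mem_filter mem_enum andbT; case: (k == ks); rewrite ?orbT.
Qed.

Lemma gadget_tour_path : path cheap_step v0 (rcons (behead gadget_tour) v0).
Proof.
have val_spine : map val spine = iota 1 m.+1.
  by have := val_enum_ord m.+2; rewrite enum_ordSl => -[].
have last_spine : val (last ord0 spine) = m.+1.
  by rewrite -last_map val_spine last_iota.
rewrite /= rcons_cat cat_path path_map; apply/andP; split.
  have : path (fun i j : 'I_m.+2 => i.+1 == j) ord0 spine.
    by have := iota_succ_path 0 m.+1; rewrite -val_spine (@path_map _ _ val _ ord0).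
  apply: sub_path => i j ij; rewrite /cheap_step /=.
  by apply: dist_edge; rewrite /gadget_edge /= ij.
have e_spine_w : e (v_ (last ord0 spine)) (w_ ks).
  by rewrite /gadget_edge /= last_spine !eqxx orbT.
rewrite last_map /= /cheap_step /= (dist_edge e_spine_w) (dist_edge (edge_wu ks)) /=.
by apply: pendants_path; apply/allP => i; rewrite mem_filter => /andP[].
Qed.

Lemma gadget_upper : tsp_cost e <= m.+2 + 4 * N.
Proof.
apply: leq_trans (tsp_cost_le_tour e gadget_tour_perm) _.
rewrite /gadget_tour tour_cost_cons.
apply: leq_trans (walk_sum_le_weights gadget_tour_path) _.
rewrite belast_rcons (perm_sumn (perm_map weight gadget_tour_perm)).
rewrite sumnE big_map big_enum /= !big_sumType /= !sum_nat_const !card_ord; lia.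
Qed.

End UpperBound.
End Gadget.

Theorem mainTheorem20 (N n : nat) (x : 'I_N -> bool) (ks : 'I_N) :
  1 <= N -> 2 * N + 2 <= n ->
  (x ks -> tsp_cost (gadget_edge (M := n - 2 * N) x ks) <= n + 2 * N) /\
  (~~ x ks -> 2 * n - N - 1 <= tsp_cost (gadget_edge (M := n - 2 * N) x ks)).
Proof.
move=> _ n_large.
have [m path_len] : exists m, n - 2 * N = m.+2 by exists (n - 2 * N - 2); lia.
rewrite path_len; split=> xk.
- by apply: leq_trans (gadget_upper m xk) _; lia.
- by apply: leq_trans (gadget_lower m xk); lia.
Qed.
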